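(* Let $n\ge1$ and let $\tau$ be real with $\tau<\frac{1}{n-1}$ (no upper restriction when $n=1$). Then every $\omega\in\Omega_n(\tau)$ is non-resonant, i.e. $\langle k,\omega\rangle\notin\mathbb{Z}$ for all $k\in\mathbb{Z}^n\setminus\{0\}$. Here $\Omega_n(\tau)$ is the set of $\omega\in\mathbb{R}^n$ for which there exists $C>0$ such that $\|T\omega\|_{\mathbb{Z}}\ge C\,T^{-(1+\tau)/n}$ for every integer $T\ge1$.
   Context: For $\omega\in\mathbb{R}^n$, $|\omega|=\max_i|\omega_i|$ and $\|\omega\|_{\mathbb{Z}}=\min_{k\in\mathbb{Z}^n}|\omega-k|$. *)

From HB Require Import structures.
From mathcomp Require Import all_boot all_order all_algebra.
From mathcomp Require Import all_classical all_reals all_analysis.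
Set Implicit Arguments. Unset Strict Implicit. Unset Printing Implicit Defensive.
Import Order.TTheory GRing.Theory Num.Theory.
Local Open Scope ring_scope.

Definition supnorm (R : realType) (n : nat) (v : 'I_n -> R) : R :=
  \big[Num.max/0]_(i < n) `|v i|.

(* ||v||_Z >= c, i.e. min_{k in Z^n} |v - k| >= c (the min is attained) *)
Definition normZ_ge (R : realType) (n : nat) (v : 'I_n -> R) (c : R) : Prop :=
  forall k : 'I_n -> int, c <= supnorm (fun i => v i - (k i)%:~R).

Definition Omega (R : realType) (n : nat) (tau : R) (w : 'I_n -> R) : Prop :=
  exists C : R, 0 < C /\
    forall T : nat, (1 <= T)%N ->
      normZ_ge (fun i => T%:R * w i)
               (C * (T%:R `^ (- (1 + tau) / n%:R))).

Definition nonresonant (R : realType) (n : nat) (w : 'I_n -> R) : Prop :=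
  forall k : 'I_n -> int, (exists i, k i != 0) ->
    ~ (exists m : int, \sum_(i < n) (k i)%:~R * w i = m%:~R).

From mathcomp Require Import all_boot all_order all_algebra.
From mathcomp Require Import all_classical all_reals all_analysis.
From mathcomp Require Import ring lra.
Set Implicit Arguments. Unset Strict Implicit. Unset Printing Implicit Defensive.
Import Order.TTheory GRing.Theory Num.Theory.
Local Open Scope ring_scope.

(* Suppose <k, w> = m with k_j = s > 0. Dirichlet's theorem applied to the n - 1
   coordinates w_l, l <> j, gives 0 < q <= Q^(n-1) with ||q w_l||_Z <= 1/Q; the
   relation s w_j = m - sum_(l <> j) k_l w_l then controls the remaining
   coordinate, so T = q s satisfies ||T w||_Z <= K/Q with K = sum_i |k_i|.
   On the other hand w in Omega_n(tau) forces ||T w||_Z >= C (s Q^(n-1))^(-b)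
   with b = max(0, (1 + tau)/n), and (n - 1) b < 1 is exactly the hypothesis
   tau < 1/(n - 1); so K/Q is too small once Q is large. *)

Section Dirichlet.
Variable R : realType.

Definition fracr (y : R) : R := y - (Num.floor y)%:~R.

Lemma fracr_itv (y : R) : 0 <= fracr y < 1.
Proof.
by have := floor_itv y; rewrite /fracr intrD => /andP[? ?]; apply/andP; split; lra.
Qed.

Lemma floor_eq_dist_lt1 (y1 y2 : R) : Num.floor y1 = Num.floor y2 -> `|y1 - y2| < 1.
Proof.
move=> e; have := floor_itv y1; have := floor_itv y2; rewrite e !intrD.
by move=> /andP[? ?] /andP[? ?]; rewrite ltr_norml; apply/andP; split; lra.
Qed.

Definition frac_box (Q : nat) (y : R) : 'I_Q.+1 :=
  inord `|Num.floor (Q.+1%:R * fracr y)|%N.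

Lemma frac_boxE Q (y : R) : frac_box Q y = Num.floor (Q.+1%:R * fracr y) :> int.
Proof.
have /andP[f0 f1] := fracr_itv y.
have z0 : 0 <= Num.floor (Q.+1%:R * fracr y) by rewrite floor_ge0 mulr_ge0.
rewrite inordK -?ltz_nat gez0_abs // floor_lt_int.
by rewrite -[X in _ < X]mulr1 ltr_pM2l ?ltr0Sn.
Qed.

Lemma frac_box_eq Q (y1 y2 : R) : frac_box Q y1 = frac_box Q y2 ->
  `|fracr y1 - fracr y2| < Q.+1%:R^-1.
Proof.
move=> /(congr1 (fun i : 'I_Q.+1 => Posz i)); rewrite !frac_boxE => /floor_eq_dist_lt1.
by rewrite -mulrBr normrM ger0_norm // -ltr_pdivlMl ?ltr0Sn // mulr1.
Qed.

Lemma dirichlet_simultaneous (d Q : nat) (x : 'I_d -> R) : (0 < Q)%N ->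
  exists q : nat, [/\ (0 < q)%N, (q <= Q ^ d)%N &
     forall i, exists p : int, `|q%:R * x i - p%:~R| <= Q%:R^-1].
Proof.
case: Q => [//|Q] _.
pose g (t : 'I_(Q.+1 ^ d).+1) : {ffun 'I_d -> 'I_Q.+1} :=
  [ffun i => frac_box Q (t%:R * x i)].
have /injectivePn[t1 [t2 ne12 g12]] : ~~ injectiveb g.
  apply/injectiveP => /leq_card; by rewrite card_ffun !card_ord ltnn.
wlog lt12 : t1 t2 ne12 g12 / (t1 < t2)%N.
  move=> W; case: (ltngtP t1 t2) => h; first exact: W h.
    by apply: (W t2 t1); rewrite // eq_sym.
  by move: ne12; rewrite -val_eqE /= h eqxx.
exists (t2 - t1)%N; split; first by rewrite subn_gt0.
  by rewrite leq_subLR -ltnS (leq_trans (ltn_ord t2)) // ltnS leq_addl.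
move=> i; exists (Num.floor (t2%:R * x i) - Num.floor (t1%:R * x i)).
have := congr1 (fun f : {ffun _ -> _} => f i) g12.
rewrite !ffunE => /frac_box_eq /ltW; rewrite distrC /fracr natrB ?(ltnW lt12) // intrB.
by congr (`|_| <= _); ring.
Qed.

End Dirichlet.

Section Growth.
Variable R : realType.

Lemma exists_nat_div_lt_powRN (C K b : R) (s d : nat) :
  0 < C -> 0 <= K -> (0 < s)%N -> 0 <= b -> d%:R * b < 1 ->
  exists Q : nat, (0 < Q)%N /\ K / Q%:R < C * (s * Q ^ d)%N%:R `^ (- b).
Proof.
move=> C0 K0 s0 b0 db1.
set e := 1 - d%:R * b; have e0 : 0 < e by rewrite subr_gt0.
have Sb0 : 0 < s%:R `^ b by rewrite powR_gt0 ?ltr0n.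
(* As (s Q^d)^b = s^b Q^(1 - e), the claim amounts to K s^b / C < Q^e. *)
set L := K * s%:R `^ b / C.
have L0 : 0 <= L by rewrite divr_ge0 ?mulr_ge0 // ltW.
exists (Num.bound (L `^ e^-1)).+1; split=> //.
set Q := (Num.bound _).+1; have Q0 : 0 < Q%:R :> R by rewrite ltr0n.
have LQ : L < Q%:R `^ e.
  have : L `^ e^-1 < Q%:R.
    by rewrite (lt_le_trans (archi_boundP _)) ?powR_ge0 // ler_nat.
  move/(gt0_ltr_powR e0); rewrite -powRrM mulVf ?gt_eqF // powRr1 //.
  by apply; rewrite nnegrE ?powR_ge0 ?ltW.
have -> : (s * Q ^ d)%N%:R `^ (- b) = (s%:R `^ b)^-1 * Q%:R `^ e / Q%:R.
  rewrite natrM natrX powRN powRM ?exprn_ge0 // -powR_mulrn ?ltW // -powRrM.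
  have -> : d%:R * b = 1 - e by rewrite /e opprB addrC subrK.
  rewrite powRB ?(gt_eqF Q0) ?implybT // powRr1 ?ltW //.
  by rewrite invfM invf_div mulrA.
rewrite mulrA ltr_pM2r ?invr_gt0 //.
by move: LQ; rewrite /L ltr_pdivrMr // -ltr_pdivlMr //; congr (_ < _); ring.
Qed.

Lemma powRN_le_powR (T M a b : R) : 0 <= b -> - b <= a -> 1 <= T -> T <= M ->
  M `^ (- b) <= T `^ a.
Proof.
move=> b0 ba T1 TM; have T0 : 0 < T by apply: lt_le_trans T1.
apply: le_trans (ler_powR T1 ba); rewrite !powRN lef_pV2 ?posrE ?powR_gt0 //.
- by rewrite ge0_ler_powR // nnegrE ltW // (lt_le_trans T0).
- exact: lt_le_trans TM.
Qed.

Lemma max0_exponent_lt1 (d : nat) (tau : R) : ((0 < d)%N -> tau < 1 / d%:R) ->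
  d%:R * Num.max 0 ((1 + tau) / d.+1%:R) < 1.
Proof.
case: d => [|d] htau; first by rewrite mul0r ltr01.
have := htau isT; rewrite ltr_pdivlMr ?ltr0Sn // => dtau.
case: (leP 0 ((1 + tau) / d.+2%:R)) => _; last by rewrite mulr0 ltr01.
rewrite mulrA ltr_pdivrMr ?ltr0Sn // mul1r mulrDr mulr1 [d.+2%:R]mulrS.
lra.
Qed.

End Growth.

Lemma supnorm_le (R : realType) n (v : 'I_n -> R) c :
  0 <= c -> (forall i, `|v i| <= c) -> supnorm v <= c.
Proof.
by move=> c0 vc; rewrite /supnorm; elim/big_ind: _ => // x y; rewrite ge_max => -> ->.
Qed.

Section ResonantVector.
Variables (R : realType) (d : nat) (w : 'I_d.+1 -> R).
Variables (k : 'I_d.+1 -> int) (m : int) (j : 'I_d.+1) (s : nat).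
Hypothesis kj : k j = s%:Z.
Hypothesis resonance : \sum_i (k i)%:~R * w i = m%:~R.

Lemma sum_norm_coefs_split :
  \sum_i `|(k i)%:~R : R| = s%:R + \sum_l `|(k (lift j l))%:~R : R|.
Proof. by rewrite (bigD1_ord j) //= kj normr_nat. Qed.

Lemma resonant_multiple_near_int (q : nat) (p : 'I_d -> int) (eps : R) : 0 <= eps ->
  (forall l, `|q%:R * w (lift j l) - (p l)%:~R| <= eps) ->
  exists P : 'I_d.+1 -> int,
    supnorm (fun i => (q * s)%N%:R * w i - (P i)%:~R) <= (\sum_i `|(k i)%:~R|) * eps.
Proof.
move=> eps0 hp; rewrite sum_norm_coefs_split.
exists (fun i => if unlift j i is Some l then s%:Z * p l
  else q%:Z * m - \sum_l k (lift j l) * p l).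
apply: supnorm_le => [|i]; first by rewrite mulr_ge0 ?addr_ge0 ?sumr_ge0.
case: (unliftP j i) => [l|] ->; rewrite ?liftK ?unlift_none.
- have -> : (q * s)%N%:R * w (lift j l) - (s%:Z * p l)%:~R =
      s%:R * (q%:R * w (lift j l) - (p l)%:~R) by rewrite natrM intrM; ring.
  rewrite normrM normr_nat (le_trans (ler_wpM2l (ler0n _ _) (hp l))) //.
  by rewrite ler_wpM2r // lerDl sumr_ge0.
- have hwj : s%:R * w j = m%:~R - \sum_l (k (lift j l))%:~R * w (lift j l).
    by rewrite -resonance (bigD1_ord j) //= kj addrK.
  have -> : (q * s)%N%:R * w j - (q%:Z * m - \sum_l k (lift j l) * p l)%:~R =
      \sum_l (k (lift j l))%:~R * ((p l)%:~R - q%:R * w (lift j l)).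
    have -> : \sum_l (k (lift j l))%:~R * ((p l)%:~R - q%:R * w (lift j l)) =
        \sum_l (k (lift j l) * p l)%:~R -
        q%:R * \sum_l (k (lift j l))%:~R * w (lift j l).
      by rewrite mulr_sumr -sumrB; apply: eq_bigr => l _; rewrite intrM; ring.
    rewrite natrM -mulrA hwj intrB intrM pmulrn rmorph_sum; ring.
  apply: le_trans (ler_norm_sum _ _ _) _.
  apply: (@le_trans _ _ ((\sum_l `|(k (lift j l))%:~R|) * eps)).
    by rewrite mulr_suml; apply: ler_sum => l _; rewrite normrM distrC ler_wpM2l.
  by rewrite ler_wpM2r // lerDr.
Qed.
End ResonantVector.

Theorem mainTheorem5 (R : realType) (n : nat) (tau : R) :
  (1 <= n)%N ->
  ((1 < n)%N -> tau < 1 / (n.-1)%:R) ->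
  forall w : 'I_n -> R, Omega tau w -> nonresonant w.
Proof.
case: n => [//|d] _ htau w [C [C0 HC]] k [j kj0] [m hm].
pose s := `|k j|%N; have s0 : (0 < s)%N by rewrite absz_gt0.
pose k' i := sgz (k j) * k i.
have k'j : k' j = s%:Z by rewrite /k' -abszEsg.
have hm' : \sum_i (k' i)%:~R * w i = (sgz (k j) * m)%:~R :> R.
  by rewrite intrM -hm mulr_sumr; apply: eq_bigr => i _; rewrite intrM mulrA.
pose b := Num.max 0 ((1 + tau) / d.+1%:R); have b0 : 0 <= b by rewrite le_max lexx.
have K0 : 0 <= \sum_i `|(k' i)%:~R : R| by rewrite sumr_ge0.
have [Q [Q0 hQ]] := exists_nat_div_lt_powRN C0 K0 s0 b0 (max0_exponent_lt1 htau).
have [q [q0 qQ /choice[p hp]]] := dirichlet_simultaneous (fun l => w (lift j l)) Q0.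
have Qinv0 : 0 <= Q%:R^-1 :> R by rewrite invr_ge0.
have [P hP] := resonant_multiple_near_int k'j hm' Qinv0 hp.
have T0 : (0 < q * s)%N by rewrite muln_gt0 q0.
have hT : C * (s * Q ^ d)%N%:R `^ (- b) <= C * (q * s)%N%:R `^ (- (1 + tau) / d.+1%:R).
  rewrite ler_pM2l // powRN_le_powR ?ler1n ?ler_nat //.
    by rewrite mulNr lerN2 le_max lexx orbT.
  by rewrite mulnC leq_mul2l qQ orbT.
have upper := le_trans (HC _ T0 P) hP.
by move: (lt_le_trans hQ (le_trans hT upper)); rewrite ltxx.
Qed.
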